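(* Let $G=(V,E)$ be a finite connected graph with boundary $\partial G\subset V$, let $\alpha\in\Pi(\partial G)$, $p\in[0,1]$, $q>0$. Let $\widehat E\subset E$ be such that for every $e\in\widehat E$ there exists a cutset for $e$ contained in $E\setminus\widehat E$. Let $Q_{\widehat E}(e)$ be the collection of cutsets for $e$ contained in $E\setminus\widehat E$, and for $e\in\widehat E$ set \[\widehat\varepsilon_e:=|p'-p|\;\mathbb P^G_{\max(p,p')}\big(\exists\chi\in Q_{\widehat E}(e)\text{ such that all edges of }\chi\text{ are closed}\big).\] Then: (1) if $p<p'$, then $\mathbb P^G_{(p+\widehat\varepsilon_e\mathbf 1_{e\in\widehat E})_e}\preceq\phi^\alpha_{G,p,q}$; (2) if $p>p'$, then $\phi^\alpha_{G,p,q}\preceq\mathbb P^G_{(p-\widehat\varepsilon_e\mathbf 1_{e\in\widehat E})_e}$.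
   Context: Configurations are $\omega\in\{0,1\}^E$; an edge $e$ is open if $\omega(e)=1$, closed otherwise. $\Pi(\partial G)$ denotes the set of partitions of $\partial G$; vertices in the same block of $\alpha$ are called wired. $G\cup\alpha$ is the (multi)graph obtained from $G$ by identifying wired vertices. $k(\omega,\alpha)$ is the number of connected components of the graph with vertex set $V$ and edge set the open edges of $\omega$, after identifying wired vertices. The FK measure is $\phi^\alpha_{G,p,q}(\omega)=Z^{-1}\big(\prod_{e\in E}p^{\omega(e)}(1-p)^{1-\omega(e)}\big)q^{k(\omega,\alpha)}$. Set $p':=\frac{p}{p+q(1-p)}$. A cutset for an edge $e$ is a set $\chi\subset E\setminus\{e\}$ such that the endpoints of $e$ lie in different connected components of $G\cup\alpha$ with the edges of $\chi\cup\{e\}$ removed. $\mathbb P^G_{(p_e)}$ is the product measure on $\{0,1\}^E$ where edge $e$ is open independently with probability $p_e$ ($\mathbb P^G_s$ when $p_e\equiv s$). $\mu\preceq\mu'$ means $\mu(A)\le\mu'(A)$ for all increasing events $A$. *)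

From HB Require Import structures.
From mathcomp Require Import all_boot all_order all_algebra.
Set Implicit Arguments. Unset Strict Implicit. Unset Printing Implicit Defensive.
Import Order.TTheory GRing.Theory Num.Theory.
Local Open Scope ring_scope.

Section FK.
Variables (V E : finType) (ends : E -> V * V).

Definition config := {ffun E -> bool}.

Definition wired (alpha : {set {set V}}) (x y : V) : bool :=
  [exists B in alpha, (x \in B) && (y \in B)].

(* adjacency using only the edges of S, after identifying wired vertices *)
Definition adj (alpha : {set {set V}}) (S : {set E}) : rel V :=
  fun x y => [exists e in S, (ends e == (x, y)) || (ends e == (y, x))]
             || wired alpha x y.

Definition conn (alpha : {set {set V}}) (S : {set E}) (x y : V) : bool :=
  connect (adj alpha S) x y.

Definition graph_connected : Prop :=
  forall x y : V, connect (adj set0 [set: E]) x y.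

Definition open_edges (w : config) : {set E} := [set e | w e].

Definition kcomp (alpha : {set {set V}}) (w : config) : nat :=
  #|[set [set y | conn alpha (open_edges w) x y] | x : V]|.

Definition cutset (alpha : {set {set V}}) (e : E) (chi : {set E}) : bool :=
  (e \notin chi) && ~~ conn alpha (~: (e |: chi)) (ends e).1 (ends e).2.

Variable R : realFieldType.

Definition fk_weight (p q : R) (alpha : {set {set V}}) (w : config) : R :=
  (\prod_(e : E) (if w e then p else 1 - p)) * q ^+ kcomp alpha w.

Definition fk_Z (p q : R) (alpha : {set {set V}}) : R :=
  \sum_(w : config) fk_weight p q alpha w.

Definition fk_measure (p q : R) (alpha : {set {set V}}) (A : {set config}) : R :=
  (\sum_(w in A) fk_weight p q alpha w) / fk_Z p q alpha.

Definition prod_measure (pe : E -> R) (A : {set config}) : R :=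
  \sum_(w in A) \prod_(e : E) (if w e then pe e else 1 - pe e).

Definition increasing (A : {set config}) : Prop :=
  forall w w' : config, w \in A -> (forall e, w e ==> w' e) -> w' \in A.

Definition stoch_le (mu mu' : {set config} -> R) : Prop :=
  forall A, increasing A -> mu A <= mu' A.

Definition pprime (p q : R) : R := p / (p + q * (1 - p)).

Definition closed_cutset_event (alpha : {set {set V}}) (Ehat : {set E}) (e : E)
  : {set config} :=
  [set w : config | [exists chi : {set E},
      [&& cutset alpha e chi, chi \subset ~: Ehat & [forall f in chi, ~~ w f]]]].

Definition eps_hat (p q : R) (alpha : {set {set V}}) (Ehat : {set E}) (e : E) : R :=
  `|pprime p q - p| *
  prod_measure (fun _ => Num.max p (pprime p q)) (closed_cutset_event alpha Ehat e).

End FK.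

(* Reveal the edges one at a time.  Closing an open edge e multiplies the FK weight
   by (1-p)/p, and by a further q exactly when e is pivotal (its endpoints are not
   connected by the other open edges).  Hence, whatever has been revealed, the
   conditional probability that e is open is p + (p' - p) times the conditional
   probability that e is pivotal: it lies between p and p', and a sequential coupling
   compares phi with product measures.  On Ehat one does better by revealing its edges
   first: as long as E \ Ehat is unrevealed, e is pivotal whenever some cutset inside
   E \ Ehat is closed.  That event is decreasing and depends only on E \ Ehat, and phi
   is dominated by P_{max(p,p')} under any conditioning, so its conditional probability
   is at least its P_{max(p,p')}-probability; this is the extra bias eps_hat. *)

From HB Require Import structures.
From mathcomp Require Import all_boot all_order all_algebra.
From mathcomp Require Import ring lra.
Set Implicit Arguments. Unset Strict Implicit. Unset Printing Implicit Defensive.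
Import Order.TTheory GRing.Theory Num.Theory.
Local Open Scope ring_scope.

Section Conditioning.
Variables (E : finType) (R : realFieldType).
Implicit Types (S T : {set E}) (eta w : config E) (P : pred (config E)).
Implicit Types (nu : config E -> R) (r : E -> R).

Definition agree_off S eta w : bool := [forall i, (i \notin S) ==> (w i == eta i)].

Definition update (e : E) (b : bool) w : config E :=
  [ffun i => if i == e then b else w i].

Definition toggle (e : E) w : config E := update e (~~ w e) w.

Definition flip w : config E := [ffun i => ~~ w i].

(* Unnormalised conditioning: divided by [mass nu S eta predT], this is the
   probability of [P] under [nu] given that the configuration equals [eta] off [S]. *)
Definition mass nu S eta P : R := \sum_(w | agree_off S eta w && P w) nu w.

Definition prod_weight r S w : R := \prod_(i in S) (if w i then r i else 1 - r i).

Definition depends_only_on T (C : {set config E}) : Prop :=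
  forall w w', {in T, forall i, w i = w' i} -> (w \in C) = (w' \in C).

Lemma update_eq e b w : update e b w e = b.
Proof. by rewrite ffunE eqxx. Qed.

Lemma update_id e w : update e (w e) w = w.
Proof. by apply/ffunP => i; rewrite ffunE; case: eqP => [->|]. Qed.

Lemma toggleK e : involutive (toggle e).
Proof.
by move=> w; apply/ffunP => i; rewrite !ffunE eqxx; case: eqP => [->|]; rewrite ?negbK.
Qed.

Lemma flipK : involutive flip.
Proof. by move=> w; apply/ffunP => i; rewrite !ffunE negbK. Qed.

Lemma agree_offT eta w : agree_off [set: E] eta w.
Proof. by apply/forallP => i; rewrite inE. Qed.

Lemma agree_off0 eta w : agree_off set0 eta w = (w == eta).
Proof.
apply/forallP/eqP => [H|->]; last by move=> i; rewrite eqxx implybT.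
by apply/ffunP => i; move/implyP: (H i); rewrite inE => /(_ isT)/eqP.
Qed.

Lemma agree_off_notin S eta w i : agree_off S eta w -> i \notin S -> w i = eta i.
Proof. by move/forallP/(_ i)/implyP => H /H /eqP. Qed.

Lemma agree_off_toggle S eta e w : e \in S ->
  agree_off S eta (toggle e w) = agree_off S eta w.
Proof.
move=> eS; apply: eq_forallb => i; rewrite ffunE.
by case: (i =P e) => // ->; rewrite eS.
Qed.

Lemma agree_off_update S eta e w b : e \in S ->
  agree_off S eta w && (w e == b) = agree_off (S :\ e) (update e b eta) w.
Proof.
move=> eS; apply/idP/forallP => [/andP[/forallP H /eqP <-] i|H].
  by rewrite !inE ffunE negb_and negbK; case: eqP => [->|_ /=]; [rewrite eqxx | exact: H].
apply/andP; split; last by move/implyP: (H e); rewrite update_eq !inE eqxx; apply.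
apply/forallP => i; apply/implyP => iS; move/implyP: (H i); rewrite !inE ffunE (negbTE iS).
by case: eqP => [ie|_]; [move: iS; rewrite ie eS | rewrite andbF; apply].
Qed.

Lemma agree_off_update_toggle S eta e w b : e \notin S ->
  agree_off S (update e b eta) (toggle e w) = agree_off S (update e (~~ b) eta) w.
Proof.
move=> eS; apply: eq_forallb => i; rewrite !ffunE.
by case: (i =P e) => // ->; rewrite eS; case: (w e); case: b.
Qed.

Lemma agree_off_flip S eta w : agree_off S eta (flip w) = agree_off S (flip eta) w.
Proof. by apply: eq_forallb => i; rewrite !ffunE; case: (w i); case: (eta i). Qed.

Lemma eq_mass nu nu' S eta P P' : {in agree_off S eta, P =1 P'} ->
  {in agree_off S eta, nu =1 nu'} -> mass nu S eta P = mass nu' S eta P'.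
Proof.
move=> eP enu; apply: eq_big => [w|w /andP[ag _]]; last exact: enu.
by case ag: (agree_off S eta w) => //=; apply: eP.
Qed.

Lemma mass_ge0 nu S eta P : (forall w, 0 <= nu w) -> 0 <= mass nu S eta P.
Proof. by move=> nu_ge0; apply: sumr_ge0. Qed.

Lemma mass_le nu S eta P P' : (forall w, 0 <= nu w) -> (forall w, P w -> P' w) ->
  mass nu S eta P <= mass nu S eta P'.
Proof.
move=> nu_ge0 PP'; rewrite /mass big_mkcondr [X in _ <= X]big_mkcondr /=.
by apply: ler_sum => w _; case: ifP => [/PP' ->|_] //; case: ifP.
Qed.

Lemma massC nu S eta P :
  mass nu S eta (predC P) = mass nu S eta predT - mass nu S eta P.
Proof.
apply/eqP; rewrite eq_sym subr_eq addrC; apply/eqP.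
by rewrite /mass (bigID P); congr (_ + _); apply: eq_bigl => w; rewrite andbT.
Qed.

Lemma massD1 nu S eta e P : e \in S ->
  mass nu S eta P = mass nu (S :\ e) (update e true eta) P +
                    mass nu (S :\ e) (update e false eta) P.
Proof.
move=> eS; rewrite /mass (bigID (fun w => w e)) /=; congr (_ + _); apply: eq_bigl => w.
  by rewrite -agree_off_update // eqb_id andbAC.
by rewrite -agree_off_update // eqbF_neg andbAC.
Qed.

Lemma mass_open nu S eta e : e \in S ->
  mass nu S eta (fun w => w e) = mass nu (S :\ e) (update e true eta) predT.
Proof. by move=> eS; apply: eq_bigl => w; rewrite -agree_off_update // eqb_id andbT. Qed.

Lemma mass_toggle_pairs nu S eta e P : e \in S -> (forall w, P (toggle e w) = P w) ->
  mass nu S eta P =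
  \sum_(w | agree_off S eta w && P w && w e) (nu w + nu (toggle e w)).
Proof.
move=> eS HP; rewrite /mass (bigID (fun w => w e)) /= big_split /=; congr (_ + _).
rewrite (reindex_inj (inv_inj (toggleK e))) /=; apply: eq_bigl => w.
by rewrite agree_off_toggle // HP ffunE eqxx negbK.
Qed.

Lemma mass_update_toggle nu S eta e b P : e \notin S ->
  mass nu S (update e b eta) P =
  mass (nu \o toggle e) S (update e (~~ b) eta) (P \o toggle e).
Proof.
move=> eS; rewrite /mass (reindex_inj (inv_inj (toggleK e))) /=.
by apply: eq_bigl => w; rewrite agree_off_update_toggle.
Qed.

Lemma mass_flip nu S eta P :
  mass (nu \o flip) S eta P = mass nu S (flip eta) (P \o flip).
Proof.
rewrite /mass (reindex_inj (inv_inj flipK)) /=.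
by apply: eq_big => [w|w _]; rewrite ?agree_off_flip ?flipK.
Qed.

Lemma mass0 nu eta P : mass nu set0 eta P = if P eta then nu eta else 0.
Proof.
case: ifP => Peta; last by rewrite /mass big_pred0 // => w; rewrite agree_off0; case: eqP => // ->.
by rewrite /mass (big_pred1 eta) // => w /=; rewrite agree_off0; case: eqP => // ->.
Qed.

Lemma prod_weight_ge0 r S w : (forall i, 0 <= r i <= 1) -> 0 <= prod_weight r S w.
Proof.
move=> r01; apply: prodr_ge0 => i _; have /andP[r0 r1] := r01 i.
by case: (w i); rewrite ?subr_ge0.
Qed.

Lemma prod_weightD1 r S e w : e \in S ->
  prod_weight r S w = (if w e then r e else 1 - r e) * prod_weight r (S :\ e) w.
Proof.
move=> eS; rewrite /prod_weight (bigD1 e) //=; congr (_ * _).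
by apply: eq_bigl => i; rewrite !inE andbC.
Qed.

Lemma prod_weight_toggle r S e w : e \notin S -> prod_weight r S (toggle e w) = prod_weight r S w.
Proof.
move=> eS; apply: eq_bigr => i iS; rewrite ffunE.
by case: eqP => // ie; move: iS; rewrite ie (negbTE eS).
Qed.

Lemma prod_weight_flip r S w :
  prod_weight r S (flip w) = prod_weight (fun i => 1 - r i) S w.
Proof. by apply: eq_bigr => i _; rewrite ffunE; case: (w i) => //=; rewrite opprB addrC subrK. Qed.

Lemma prod_weight_set0 r w : prod_weight r set0 w = 1.
Proof. exact: big_set0. Qed.

Lemma mass_prod_weightD1 r S eta e P : e \in S ->
  mass (prod_weight r S) S eta P =
  r e * mass (prod_weight r (S :\ e)) (S :\ e) (update e true eta) P +
  (1 - r e) * mass (prod_weight r (S :\ e)) (S :\ e) (update e false eta) P.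
Proof.
move=> eS; have eS' : e \notin S :\ e by rewrite !inE eqxx.
rewrite (massD1 _ _ _ eS) !mulr_sumr.
by congr (_ + _); apply: eq_bigr => w /andP[ag _];
  rewrite (prod_weightD1 _ _ eS) (agree_off_notin ag eS') update_eq.
Qed.

Lemma mass_prod_weight_event r T (C : {set config E}) : depends_only_on T C ->
  forall S eta, T \subset S -> mass (prod_weight r S) S eta [in C] = prod_measure r C.
Proof.
move=> depC S; move: {2}#|~: S| (erefl #|~: S|) => n.
elim: n S => [|n IH] S cS eta TS.
  have -> : S = [set: E] by rewrite -[S]setCK (cards0_eq cS) setC0.
  by apply: eq_big => [w|w _]; rewrite ?agree_offT //; apply: eq_bigl => i; rewrite inE.
have [e] : exists e, e \in ~: S by apply/set0Pn; rewrite -card_gt0 cS.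
rewrite inE => eS; have eS' : e \in e |: S by rewrite setU11.
have cS' : #|~: (e |: S)| = n.
  by move: cS; rewrite (cardsD1 e) inE eS setCU setIC => -[<-]; rewrite setDE.
have TS' : T \subset e |: S by apply: subset_trans TS (subsetUr _ _).
have same_b b : mass (prod_weight r S) S (update e b eta) [in C] =
                mass (prod_weight r S) S (update e (~~ b) eta) [in C].
  rewrite (mass_update_toggle _ _ _ _ eS); apply: eq_mass => w _ /=.
    apply: depC => i iT; rewrite ffunE; case: eqP => // ie.
    by move: eS; rewrite -ie (subsetP TS).
  exact: prod_weight_toggle.
rewrite -(IH _ cS' eta TS') (mass_prod_weightD1 _ _ _ eS') setU1K //.
rewrite -[in LHS](update_id e eta); case: (eta e).
  by rewrite [X in _ + _ * X]same_b -mulrDl addrC subrK mul1r.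
by rewrite [X in _ * X + _]same_b -mulrDl addrC subrK mul1r.
Qed.

Lemma mass_prod_weight_total r S eta : mass (prod_weight r S) S eta predT = 1.
Proof.
have depT : depends_only_on set0 [set: config E] by move=> w w' _; rewrite !inE.
have totalE S' eta' : mass (prod_weight r S') S' eta' predT = prod_measure r [set: config E].
  rewrite -(mass_prod_weight_event r depT eta' (sub0set S')).
  by apply: eq_bigl => w; rewrite in_setT.
by rewrite totalE -(totalE set0 eta) mass0 prod_weight_set0.
Qed.

Lemma eq_prod_measure r r' : r =1 r' -> prod_measure r =1 prod_measure r'.
Proof. by move=> rr' A; apply: eq_bigr => w _; apply: eq_bigr => i _; rewrite rr'. Qed.

Lemma prod_measureE r eta (A : {set config E}) :
  prod_measure r A = mass (prod_weight r [set: E]) [set: E] eta [in A].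
Proof.
apply: esym; apply: eq_big => [w|w _]; rewrite ?agree_offT //.
by apply: eq_bigl => i; rewrite inE.
Qed.

Lemma mass_prod_weight_increasing r S eta e (A : {set config E}) :
  (forall i, 0 <= r i <= 1) -> increasing A -> e \notin S ->
  mass (prod_weight r S) S (update e false eta) [in A] <=
  mass (prod_weight r S) S (update e true eta) [in A].
Proof.
move=> r01 incA eS; rewrite (mass_update_toggle _ _ _ _ eS) /mass.
rewrite big_mkcondr [X in _ <= X]big_mkcondr /=; apply: ler_sum => w ag.
have we : w e by rewrite (agree_off_notin ag eS) update_eq.
rewrite prod_weight_toggle //; case: ifP => hA; last by case: ifP => // _; exact: prod_weight_ge0.
rewrite (incA _ _ hA) // => i; rewrite ffunE.
by case: eqP => [->|_]; rewrite ?we ?implybT ?implybb.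
Qed.

End Conditioning.

Arguments flip {E} w.

Section Domination.
Variables (E : finType) (R : realFieldType).
Implicit Types (S : {set E}) (eta : config E) (A : {set config E}).
Implicit Types (r : E -> R) (nu : config E -> R) (good : pred {set E}).

(* Sequential coupling; [good] is an invariant of the set of unrevealed edges. *)
Lemma prod_dominated_mass r nu good :
  (forall i, 0 <= r i <= 1) -> (forall w, 0 <= nu w) ->
  (forall S eta, good S -> S != set0 -> exists2 e, e \in S &
     good (S :\ e) && (r e * mass nu S eta predT <= mass nu S eta (fun w => w e))) ->
  forall S eta A, good S -> increasing A ->
  mass (prod_weight r S) S eta [in A] * mass nu S eta predT <= mass nu S eta [in A].
Proof.
move=> r01 nu_ge0 step S; move: {2}#|S| (erefl #|S|) => n.
elim: n S => [|n IH] S cS eta A gS incA.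
  by rewrite (cards0_eq cS) !mass0 prod_weight_set0 /=; case: ifP; rewrite ?mul1r ?mul0r.
have S0 : S != set0 by rewrite -card_gt0 cS.
have [e eS /andP[gS' rN]] := step S eta gS S0.
have cS' : #|S :\ e| = n by move: cS; rewrite (cardsD1 e) eS => -[].
have eS' : e \notin S :\ e by rewrite !inE eqxx.
have mono := mass_prod_weight_increasing eta r01 incA eS'.
have IH1 := IH _ cS' (update e true eta) A gS' incA.
have IH0 := IH _ cS' (update e false eta) A gS' incA.
rewrite (mass_open _ _ eS) in rN.
rewrite (mass_prod_weightD1 _ _ _ eS) !(massD1 _ _ _ eS) in rN *.
move: mono IH1 IH0 rN.
set P1 := mass _ _ (update e true eta) _; set P0 := mass _ _ (update e false eta) _.
set N1 := mass nu _ _ predT; set N0 := mass nu _ _ predT.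
move=> mono IH1 IH0 rN.
have : 0 <= (P1 - P0) * (N1 - r e * (N1 + N0)) by apply: mulr_ge0; rewrite subr_ge0.
nra.
Qed.

(* Flipping every edge exchanges increasing and decreasing events and [r] with
   [1 - r], which reduces this to [prod_dominated_mass]. *)
Lemma mass_dominated_prod r nu good :
  (forall i, 0 <= r i <= 1) -> (forall w, 0 <= nu w) ->
  (forall S eta, good S -> S != set0 -> exists2 e, e \in S &
     good (S :\ e) && (mass nu S eta (fun w => w e) <= r e * mass nu S eta predT)) ->
  forall S eta A, good S -> increasing A ->
  mass nu S eta [in A] <= mass (prod_weight r S) S eta [in A] * mass nu S eta predT.
Proof.
move=> r01 nu_ge0 step S eta A gS incA.
have flip_incr : increasing [set w | flip w \notin A].
  move=> w w'; rewrite !inE => wA ww'; apply: contra wA => /incA; apply=> i.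
  by rewrite !ffunE; case: (w i) (w' i) (ww' i) => [] [].
have r'01 i : 0 <= 1 - r i <= 1.
  by have /andP[r0 r1] := r01 i; rewrite subr_ge0 r1 lerBlDr lerDl r0.
have step' S' eta' : good S' -> S' != set0 -> exists2 e, e \in S' & good (S' :\ e) &&
    ((1 - r e) * mass (nu \o flip) S' eta' predT <= mass (nu \o flip) S' eta' (fun w => w e)).
  move=> gS' S'0; have [e eS' /andP[ge le]] := step S' (flip eta') gS' S'0.
  exists e => //; rewrite ge !mass_flip.
  have -> : mass nu S' (flip eta') ((fun w => w e) \o flip) =
            mass nu S' (flip eta') (predC (fun w : config E => w e)).
    by apply: eq_mass => w _ //=; rewrite ffunE.
  rewrite massC; move: le; set N := mass nu _ _ predT; nra.
have := prod_dominated_mass r'01 (fun w => nu_ge0 (flip w)) step' (flip eta) gS flip_incr.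
rewrite !mass_flip flipK.
have -> : mass nu S eta ([in [set w | flip w \notin A]] \o flip) = mass nu S eta (predC [in A]).
  by apply: eq_mass => w _ //=; rewrite inE flipK.
have -> : mass (prod_weight (fun i => 1 - r i) S) S (flip eta) [in [set w | flip w \notin A]] =
          mass (prod_weight r S) S eta (predC [in A]).
  transitivity (mass (prod_weight r S \o flip) S (flip eta) [in [set w | flip w \notin A]]).
    by apply: eq_mass => w _ //=; rewrite prod_weight_flip.
  by rewrite mass_flip flipK; apply: eq_mass => w _ //=; rewrite inE flipK.
rewrite !massC mass_prod_weight_total.
set N := mass nu _ _ predT; set M := mass nu _ _ _; nra.
Qed.
End Domination.

Lemma card_imset_identify (aT rT : finType) (f : aT -> rT) (D : {set aT}) x1 x2 :
  x1 \in D -> x2 \in D -> x1 != x2 -> f x1 = f x2 -> {in D :\ x2 &, injective f} ->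
  #|f @: D|.+1 = #|D|.
Proof.
move=> Dx1 Dx2 x12 fx12 injf.
have -> : f @: D = f @: (D :\ x2).
  apply/eqP; rewrite eqEsubset [X in _ && X]imsetS ?subsetDl // andbT.
  apply/subsetP => _ /imsetP[x Dx ->]; have [->|x2x] := eqVneq x x2.
    by rewrite -fx12 imset_f // in_setD1 Dx1 andbT; apply: contraNneq x12 => ->.
  by rewrite imset_f // !inE x2x.
by rewrite card_in_imset // [in RHS](cardsD1 x2) Dx2.
Qed.

Section Components.
Variables (V E : finType) (ends : E -> V * V) (alpha : {set {set V}}).
Implicit Types (S : {set E}) (x y z : V).
Local Notation conn := (conn ends alpha).
Local Notation adj := (adj ends alpha).

Definition components S : {set {set V}} := [set [set y | conn S x y] | x : V].

Lemma adj_sym S : symmetric (adj S).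
Proof.
move=> x y; rewrite /adj /wired; congr (_ || _).
  by apply: eq_existsb => f; rewrite orbC.
by apply: eq_existsb => B; rewrite [(x \in B) && _]andbC.
Qed.

Lemma conn_sym S x y : conn S x y = conn S y x.
Proof. exact: (sym_connect_sym (adj_sym S)). Qed.

Lemma conn_refl S x : conn S x x.
Proof. exact: connect0. Qed.

Lemma conn_trans S x y z : conn S x y -> conn S y z -> conn S x z.
Proof. exact: connect_trans. Qed.

Lemma conn_sub S S' x y : S \subset S' -> conn S x y -> conn S' x y.
Proof.
move=> sSS'; apply: connect_sub => u v /orP[/existsP[f /andP[fS uv]]|uv]; apply: connect1.
  by apply/orP; left; apply/existsP; exists f; rewrite (subsetP sSS').
by rewrite /adj uv orbT.
Qed.

Lemma conn_same S x y : conn S x y -> conn S x =1 conn S y.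
Proof. exact: (same_connect (sym_connect_sym (adj_sym S))). Qed.

Lemma class_eq S x y : conn S x y -> [set z | conn S x z] = [set z | conn S y z].
Proof. by move=> xy; apply/setP => z; rewrite !inE (conn_same xy). Qed.

Section AddEdge.
Variables (S : {set E}) (e : E).
Let a := (ends e).1.
Let b := (ends e).2.

Lemma adj_setU1 x y : adj (e |: S) x y = [|| adj S x y, ends e == (x, y) | ends e == (y, x)].
Proof.
rewrite /adj; case: (wired _ _ _); rewrite ?orbT //= !orbF.
apply/existsP/idP => [[f /andP[]]|].
  rewrite !inE => /orP[/eqP-> ->|fS fxy]; first by rewrite orbT.
  by apply/orP; left; apply/existsP; exists f; rewrite fS.
case/or3P=> [/existsP[f /andP[fS xy]]|exy|eyx]; first by exists f; rewrite !inE fS orbT.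
  by exists e; rewrite setU11 exy.
by exists e; rewrite setU11 eyx orbT.
Qed.

Definition conn_via_edge x y :=
  [|| conn S x y, conn S x a && conn S b y | conn S x b && conn S a y].

Lemma conn_via_edge_step x u z :
  adj (e |: S) u z -> conn_via_edge x u -> conn_via_edge x z.
Proof.
rewrite adj_setU1 /conn_via_edge => /or3P[uz|/eqP eu|/eqP ez].
- have tr w : conn S w u -> conn S w z := fun wu => conn_trans wu (connect1 uz).
  by case/or3P=> [/tr ->|/andP[-> /tr ->]|/andP[-> /tr ->]]; rewrite ?orbT.
- have [-> ->] : u = a /\ z = b by rewrite /a /b eu.
  by case/or3P=> [->|/andP[-> _]|/andP[-> _]]; rewrite ?conn_refl ?orbT.
- have [-> ->] : z = a /\ u = b by rewrite /a /b ez.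
  by case/or3P=> [->|/andP[-> _]|/andP[-> _]]; rewrite ?conn_refl ?orbT.
Qed.

Lemma conn_setU1 x y : conn (e |: S) x y = conn_via_edge x y.
Proof.
apply/idP/idP => [xy|].
  have closed_via : closed (adj (e |: S)) (conn_via_edge x).
    move=> u z uz; apply/idP/idP; apply: conn_via_edge_step => //.
    by rewrite adj_sym.
  by have := closed_connect closed_via xy; rewrite !unfold_in /conn_via_edge conn_refl => <-.
have sS : S \subset e |: S by apply: subsetUr.
have ab : conn (e |: S) a b by apply: connect1; rewrite adj_setU1 -surjective_pairing eqxx orbT.
case/or3P=> [|/andP[xa b_y]|/andP[xb ay]]; first exact: conn_sub.
  exact: conn_trans (conn_sub sS xa) (conn_trans ab (conn_sub sS b_y)).
rewrite (conn_sym _ a) in ab.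
exact: conn_trans (conn_sub sS xb) (conn_trans ab (conn_sub sS ay)).
Qed.

Lemma card_components_setU1 :
  (#|components (e |: S)| + ~~ conn S a b)%N = #|components S|.
Proof.
pose cl x := [set y | conn S x y].
have [ab|nab] /= := boolP (conn S a b).
  suff -> : components (e |: S) = components S by rewrite addn0.
  apply: eq_imset => x; apply/setP => y.
  rewrite !inE conn_setU1 /conn_via_edge; apply/idP/idP => [|-> //].
  have ba : conn S b a by rewrite conn_sym.
  case/or3P=> [//|/andP[xa b_y]|/andP[xb ay]].
    exact: conn_trans xa (conn_trans ab b_y).
  exact: conn_trans xb (conn_trans ba ay).
pose merge (c : {set V}) := if (a \in c) || (b \in c) then cl a :|: cl b else c.
have merge_cl x : [set y | conn (e |: S) x y] = merge (cl x).
  apply/setP => y; rewrite /merge !inE conn_setU1 /conn_via_edge.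
  case xa: (conn S x a); case xb: (conn S x b) => /=.
  - by case/negP: nab; rewrite conn_sym in xa; apply: conn_trans xa xb.
  - by rewrite (conn_same xa) !inE orbF.
  - by rewrite (conn_same xb) !inE orbC.
  - by rewrite !inE orbF.
have -> : components (e |: S) = merge @: components S.
  by rewrite /components -imset_comp; apply: eq_imset.
rewrite addn1; apply: (card_imset_identify (x1 := cl a) (x2 := cl b)).
- exact: imset_f.
- exact: imset_f.
- by apply/eqP => /setP/(_ b); rewrite !inE conn_refl (negbTE nab).
- by rewrite /merge !inE !conn_refl orbT.
move=> c d /setD1P[nxb /imsetP[x _ cx]] /setD1P[nyb /imsetP[y _ dy]]; subst c d.
have merge_ncl z : cl z != cl b -> merge (cl z) = if conn S z a then cl a :|: cl b else cl z.
  move=> nzb; rewrite /merge !inE; case zb: (conn S z b); last by rewrite orbF.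
  by case/eqP: nzb; apply: class_eq.
rewrite (merge_ncl _ nxb) (merge_ncl _ nyb).
case xa: (conn S x a); case ya: (conn S y a) => //.
- by rewrite (class_eq xa) (class_eq ya).
- by move/setP/(_ a); rewrite !inE conn_refl ya.
- by move/setP/(_ a); rewrite !inE conn_refl xa.
Qed.

End AddEdge.
End Components.

Section Pivotal.
Variables (V E : finType) (ends : E -> V * V) (alpha : {set {set V}}).
Implicit Types (e : E) (w : config E) (Ehat : {set E}).

Definition pivotal e w : bool :=
  ~~ conn ends alpha (open_edges w :\ e) (ends e).1 (ends e).2.

Lemma open_edges_toggle e w : w e -> open_edges (toggle e w) = open_edges w :\ e.
Proof.
by move=> we; apply/setP => i; rewrite !inE ffunE; case: (i =P e) => [->|]; rewrite ?we.
Qed.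

Lemma pivotal_toggle e w : pivotal e (toggle e w) = pivotal e w.
Proof.
rewrite /pivotal; congr (~~ conn _ _ _ _ _); apply/setP => i; rewrite !inE ffunE.
by case: (i =P e).
Qed.

Lemma kcomp_toggle e w : w e ->
  kcomp ends alpha (toggle e w) = (kcomp ends alpha w + pivotal e w)%N.
Proof.
move=> we; rewrite /kcomp open_edges_toggle //.
by rewrite -(card_components_setU1 ends alpha (open_edges w :\ e) e) setD1K // inE.
Qed.

Lemma closed_cutset_pivotal Ehat e w :
  w \in closed_cutset_event ends alpha Ehat e -> pivotal e w.
Proof.
rewrite inE => /existsP[chi /and3P[/andP[_ cut] _ /forallP chi_closed]].
apply: contra cut; apply: conn_sub; apply/subsetP => f.
rewrite !inE negb_or => /andP[-> wf] /=.
by apply: contraL wf => fchi; have := chi_closed f; rewrite fchi.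
Qed.

Lemma closed_cutset_depends Ehat e :
  depends_only_on (~: Ehat) (closed_cutset_event ends alpha Ehat e).
Proof.
move=> w w' ww'; rewrite !inE; apply: eq_existsb => chi.
case chiE: (chi \subset ~: Ehat); rewrite ?andbF ?andbT //=; congr (_ && _).
by apply: eq_forallb => f; case fchi: (f \in chi); rewrite //= ww' // (subsetP chiE).
Qed.

Lemma closed_cutset_decreasing Ehat e :
  increasing (~: closed_cutset_event ends alpha Ehat e).
Proof.
move=> w w'; rewrite !inE => + ww'; apply: contra => /existsP[chi /and3P[cut chiE closed']].
apply/existsP; exists chi; rewrite cut chiE; apply/forallP => f; apply/implyP => fchi.
by move/forallP/(_ f)/implyP/(_ fchi): closed'; apply: contra; move/implyP: (ww' f).
Qed.

End Pivotal.

Section FKConditional.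
Variables (R : realFieldType) (V E : finType) (ends : E -> V * V).
Variables (alpha : {set {set V}}) (p q : R).
Hypotheses (p_gt0 : 0 < p) (p_lt1 : p < 1) (q_gt0 : 0 < q).
Implicit Types (e : E) (w : config E) (S : {set E}) (eta : config E).
Local Notation nu := (fk_weight ends p q alpha).
Local Notation pp := (pprime p q).

Lemma pprime_denom_gt0 : 0 < p + q * (1 - p).
Proof. by rewrite ltr_wpDr // mulr_ge0 ?subr_ge0 ?ltW. Qed.

Lemma pprime_ge0 : 0 <= pp.
Proof. by rewrite divr_ge0 ?ltW ?pprime_denom_gt0. Qed.

Lemma pprime_le1 : pp <= 1.
Proof. by rewrite ler_pdivrMr ?pprime_denom_gt0 // mul1r lerDl mulr_ge0 ?subr_ge0 ?ltW. Qed.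

Lemma fk_weight_gt0 w : 0 < nu w.
Proof.
by rewrite mulr_gt0 ?exprn_gt0 // prodr_gt0 // => i _; case: (w i); rewrite ?subr_gt0.
Qed.

Lemma fk_weight_ge0 w : 0 <= nu w.
Proof. exact/ltW/fk_weight_gt0. Qed.

Lemma fk_weight_toggle e w : w e ->
  nu w - p * (nu w + nu (toggle e w)) =
  (pp - p) * (if pivotal ends alpha e w then nu w + nu (toggle e w) else 0).
Proof.
have weightE w' : nu w' = (if w' e then p else 1 - p) *
    (\prod_(i | i != e) (if w' i then p else 1 - p)) * q ^+ kcomp ends alpha w'.
  by rewrite /fk_weight (bigD1 e) //= mulrA.
move=> we; rewrite !weightE kcomp_toggle // exprD ffunE eqxx we /=.
have -> : \prod_(i | i != e) (if toggle e w i then p else 1 - p) =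
          \prod_(i | i != e) (if w i then p else 1 - p).
  by apply: eq_bigr => i /negbTE ie; rewrite ffunE ie.
have := pprime_denom_gt0; rewrite /pprime lt0r => /andP[denom_neq0 _].
move: (\prod_(i | i != e) _) (q ^+ _) => X Q.
by case: pivotal; rewrite ?expr1 ?expr0 /=; field.
Qed.

Lemma fk_mass_open S eta e : e \in S ->
  mass nu S eta (fun w => w e) - p * mass nu S eta predT =
  (pp - p) * mass nu S eta (pivotal ends alpha e).
Proof.
move=> eS; transitivity (\sum_(w | agree_off S eta w && w e)
                           (nu w - p * (nu w + nu (toggle e w)))).
  rewrite sumrB -mulr_sumr [mass nu S eta predT](mass_toggle_pairs _ _ eS) //.
  by congr (_ - p * _); apply: eq_bigl => w; rewrite andbT.
rewrite (mass_toggle_pairs _ _ eS (pivotal_toggle ends alpha e)) mulr_sumr.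
rewrite [RHS](eq_bigl (fun w => agree_off S eta w && w e && pivotal ends alpha e w)) => [|w];
  last by rewrite andbAC.
rewrite [RHS]big_mkcondr /=; apply: eq_bigr => w /andP[_ we].
by rewrite fk_weight_toggle //; case: pivotal; rewrite ?mulr0.
Qed.

Local Notation m := (Num.max p pp).

Lemma max_pprime01 : 0 <= m <= 1.
Proof. by rewrite le_max ge_max pprime_le1 (ltW p_gt0) (ltW p_lt1). Qed.

Lemma fk_dominated_by_max S eta (A : {set config E}) : increasing A ->
  mass nu S eta [in A] <= mass (prod_weight (fun _ => m) S) S eta [in A] * mass nu S eta predT.
Proof.
move=> incA; apply: (mass_dominated_prod (good := predT)) => //.
- by move=> _; apply: max_pprime01.
- exact: fk_weight_ge0.
move=> S' eta' _ /set0Pn[e eS']; exists e => //=.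
have := fk_mass_open eta' eS'.
have D_ge0 : 0 <= mass nu S' eta' (pivotal ends alpha e).
  exact/mass_ge0/fk_weight_ge0.
have D_le : mass nu S' eta' (pivotal ends alpha e) <= mass nu S' eta' predT.
  by apply: mass_le => //; apply: fk_weight_ge0.
have [m_ge_p m_ge_pp] : p <= m /\ pp <= m by rewrite !le_max !lexx orbT.
move: D_ge0 D_le; set D := mass nu _ _ _; set N := mass nu _ _ predT.
set Ne := mass nu _ _ _; move=> D_ge0 D_le NeE.
have : 0 <= (m - pp) * D by rewrite mulr_ge0 // subr_ge0.
have : 0 <= (m - p) * (N - D) by rewrite mulr_ge0 // subr_ge0.
nra.
Qed.

Lemma fk_mass_closed_cutset Ehat e S eta : ~: Ehat \subset S ->
  prod_measure (fun _ => m) (closed_cutset_event ends alpha Ehat e) * mass nu S eta predT <=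
  mass nu S eta [in closed_cutset_event ends alpha Ehat e].
Proof.
move=> EhatS; set C := closed_cutset_event _ _ _ _.
have mass_notin (nu' : config E -> R) :
    mass nu' S eta [in ~: C] = mass nu' S eta predT - mass nu' S eta [in C].
  by rewrite -massC; apply: eq_mass => w _ //; rewrite inE.
have := fk_dominated_by_max S eta (@closed_cutset_decreasing _ _ ends alpha Ehat e).
rewrite !mass_notin mass_prod_weight_total.
rewrite (mass_prod_weight_event _ (@closed_cutset_depends _ _ ends alpha Ehat e) eta EhatS).
set N := mass nu _ _ predT; nra.
Qed.

Section Exploration.
Variable Ehat : {set E}.

Definition cutset_bias e : R :=
  if e \in Ehat then prod_measure (fun _ => m) (closed_cutset_event ends alpha Ehat e) else 0.

Definition explored_edge_prob e : R := p + (pp - p) * cutset_bias e.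

Lemma cutset_bias01 e : 0 <= cutset_bias e <= 1.
Proof.
rewrite /cutset_bias; case: ifP => _; rewrite ?lexx ?ler01 //.
rewrite (prod_measureE _ [ffun=> false]).
rewrite -(mass_prod_weight_total (fun _ : E => m) [set: E] [ffun=> false]).
have weight_ge0 w : 0 <= prod_weight (fun _ => m) [set: E] w.
  by apply: prod_weight_ge0 => i; apply: max_pprime01.
by rewrite mass_ge0 ?mass_le.
Qed.

Lemma explored_edge_prob01 e : 0 <= explored_edge_prob e <= 1.
Proof.
have /andP[t0 t1] := cutset_bias01 e.
have /andP[pp0 pp1] : 0 <= pp <= 1 by rewrite pprime_ge0 ?pprime_le1.
rewrite /explored_edge_prob; move: (cutset_bias e) t0 t1 => t t0 t1.
have p_ge0 := ltW p_gt0; have p_le1 := ltW p_lt1.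
have : 0 <= (1 - t) * p by rewrite mulr_ge0 // subr_ge0.
have : 0 <= (1 - t) * (1 - p) by rewrite mulr_ge0 // subr_ge0.
have : 0 <= t * pp by rewrite mulr_ge0.
have : 0 <= t * (1 - pp) by rewrite mulr_ge0 // subr_ge0.
by move=> *; apply/andP; split; nra.
Qed.

(* The edges of [Ehat] are explored first, while all of [~: Ehat] is still
   unrevealed; then the remaining ones. *)
Definition explorable S : bool := (~: Ehat \subset S) || (S \subset ~: Ehat).

(* Stated with the factor [pp - p] so that it serves both [p < pp] and [pp < p]. *)
Lemma fk_exploration S eta : explorable S -> S != set0 -> exists2 e, e \in S &
  explorable (S :\ e) &&
  (0 <= (pp - p) * (mass nu S eta (fun w => w e) - explored_edge_prob e * mass nu S eta predT)).
Proof.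
move=> explS S0.
have gap e : e \in S ->
    cutset_bias e * mass nu S eta predT <= mass nu S eta (pivotal ends alpha e) ->
    0 <= (pp - p) * (mass nu S eta (fun w => w e) - explored_edge_prob e * mass nu S eta predT).
  move=> eS; have := fk_mass_open eta eS.
  rewrite /explored_edge_prob; set D := mass nu _ _ (pivotal _ _ _).
  set N := mass nu _ _ predT; set Ne := mass nu _ _ _; move: (cutset_bias e) => t NeE DtN.
  have -> : Ne - (p + (pp - p) * t) * N = (pp - p) * (D - t * N).
    by rewrite mulrBr -NeE; ring.
  by rewrite mulrA -expr2 mulr_ge0 ?sqr_ge0 // subr_ge0.
have [e /andP[eS eEhat]|noEhat] := pickP (fun e => (e \in S) && (e \in Ehat)).
  have EhatS : ~: Ehat \subset S.
    case/orP: explS => // /subsetP/(_ e eS); by rewrite inE eEhat.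
  exists e => //; apply/andP; split.
    apply/orP; left; apply/subsetP => f fEhat; rewrite !inE (subsetP EhatS _ fEhat) andbT.
    by apply: contraTneq fEhat => ->; rewrite inE eEhat.
  apply: gap => //; rewrite /cutset_bias eEhat.
  apply: le_trans (fk_mass_closed_cutset e eta EhatS) _.
  by apply: mass_le => [w|w]; [apply: fk_weight_ge0 | apply: closed_cutset_pivotal].
have [e eS] := set0Pn _ S0.
have SEhat : S \subset ~: Ehat.
  by apply/subsetP => f fS; move: (noEhat f); rewrite fS /= inE => ->.
exists e => //; apply/andP; split.
  by rewrite /explorable (subset_trans (subD1set S e) SEhat) orbT.
apply: gap => //; rewrite /cutset_bias; move/subsetP/(_ e eS): SEhat; rewrite inE => /negbTE ->.
by rewrite mul0r mass_ge0 // => w; apply: fk_weight_ge0.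
Qed.

Lemma fk_mass_total_gt0 eta : 0 < mass nu [set: E] eta predT.
Proof.
rewrite /mass (bigD1 eta) ?agree_offT //= ltr_wpDr ?fk_weight_gt0 //.
by apply: sumr_ge0 => w _; apply: fk_weight_ge0.
Qed.

Lemma fk_measureE eta (A : {set config E}) :
  fk_measure ends p q alpha A = mass nu [set: E] eta [in A] / mass nu [set: E] eta predT.
Proof. by congr (_ / _); apply: eq_bigl => w; rewrite agree_offT. Qed.

Lemma prod_explored_le_fk : p < pp ->
  stoch_le (prod_measure explored_edge_prob) (fk_measure ends p q alpha).
Proof.
move=> lt_ppp A incA; rewrite (prod_measureE _ [ffun=> false]) (fk_measureE [ffun=> false]).
rewrite ler_pdivlMr ?fk_mass_total_gt0 //.
apply: (prod_dominated_mass (good := explorable)) => //; last by rewrite /explorable subsetT.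
- exact: explored_edge_prob01.
- exact: fk_weight_ge0.
move=> S eta explS S0; have [e eS /andP[explSe gap]] := fk_exploration eta explS S0.
have pos : 0 < pp - p by rewrite subr_gt0.
by exists e; rewrite // explSe -subr_ge0 -(pmulr_rge0 _ pos).
Qed.

Lemma fk_le_prod_explored : pp < p ->
  stoch_le (fk_measure ends p q alpha) (prod_measure explored_edge_prob).
Proof.
move=> lt_ppp A incA; rewrite (prod_measureE _ [ffun=> false]) (fk_measureE [ffun=> false]).
rewrite ler_pdivrMr ?fk_mass_total_gt0 //.
apply: (mass_dominated_prod (good := explorable)) => //; last by rewrite /explorable subsetT.
- exact: explored_edge_prob01.
- exact: fk_weight_ge0.
move=> S eta explS S0; have [e eS /andP[explSe gap]] := fk_exploration eta explS S0.
have neg : pp - p < 0 by rewrite subr_lt0.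
by exists e; rewrite // explSe -subr_le0 -(nmulr_rge0 _ neg).
Qed.

Lemma eps_hat_addE e : p < pp ->
  p + (if e \in Ehat then eps_hat ends p q alpha Ehat e else 0) = explored_edge_prob e.
Proof.
move=> lt_ppp; rewrite /explored_edge_prob /cutset_bias /eps_hat gtr0_norm ?subr_gt0 //.
by case: ifP; rewrite ?mulr0.
Qed.

Lemma eps_hat_subE e : pp < p ->
  p - (if e \in Ehat then eps_hat ends p q alpha Ehat e else 0) = explored_edge_prob e.
Proof.
move=> lt_ppp; rewrite /explored_edge_prob /cutset_bias /eps_hat ltr0_norm ?subr_lt0 //.
by case: ifP; rewrite ?mulr0 ?subr0 ?addr0 // mulNr opprK.
Qed.

End Exploration.
End FKConditional.

Lemma pprime_neq_bounds (R : realFieldType) (p q : R) :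
  0 <= p <= 1 -> pprime p q != p -> 0 < p < 1.
Proof.
case/andP=> p_ge0 p_le1; rewrite lt_neqAle [p < 1]lt_neqAle p_ge0 p_le1 !andbT.
apply: contraR => /nandP[/negbNE/eqP <-|/negbNE/eqP ->]; rewrite /pprime.
  by rewrite mul0r.
by rewrite subrr mulr0 addr0 divr1.
Qed.

Unset Implicit Arguments.
Unset Strict Implicit.

Theorem proposition3p1 (R : realFieldType) (V E : finType) (ends : E -> V * V)
  (bd : {set V}) (alpha : {set {set V}}) (p q : R) (Ehat : {set E}) :
  graph_connected ends ->
  partition alpha bd ->
  0 <= p <= 1 -> 0 < q ->
  (forall e, e \in Ehat -> exists chi : {set E},
       cutset ends alpha e chi /\ chi \subset ~: Ehat) ->
  (p < pprime p q ->
     stoch_le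
       (prod_measure (fun e => p + (if e \in Ehat then eps_hat ends p q alpha Ehat e else 0)))
       (fk_measure ends p q alpha)) /\
  (pprime p q < p ->
     stoch_le
       (fk_measure ends p q alpha)
       (prod_measure (fun e => p - (if e \in Ehat then eps_hat ends p q alpha Ehat e else 0)))).
Proof.
move=> _ _ p01 q_gt0 _; split=> [lt_ppp|lt_ppp] A incA.
  have /andP[p_gt0 p_lt1] := pprime_neq_bounds p01 (negbT (gt_eqF lt_ppp)).
  rewrite (eq_prod_measure (fun e => eps_hat_addE ends alpha Ehat e lt_ppp)).
  exact: prod_explored_le_fk.
have /andP[p_gt0 p_lt1] := pprime_neq_bounds p01 (negbT (lt_eqF lt_ppp)).
rewrite (eq_prod_measure (fun e => eps_hat_subE ends alpha Ehat e lt_ppp)).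
exact: fk_le_prod_explored.
Qed.
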